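(* Let $p$ be an odd prime, $a_1,a_2,a_3\in\mathbb{F}_p$, $s = 3+a_1+a_2+a_3$, and let $x=(x_1,x_2,x_3)\in\mathbb{F}_p^3$, $x\neq(0,0,0)$, be a solution of \[ x_1^2+x_2^2+x_3^2+a_1x_2x_3+a_2x_1x_3+a_3x_1x_2 = s\,x_1x_2x_3 \] with $x_i = 0$ for some index $i$ (indices modulo $3$). Then $x_{i-1}\neq 0$; put $r_i := x_{i+1}/x_{i-1}$, which satisfies $r_i^2+a_ir_i+1=0$. Let $m_k$ ($k=1,2,3$) be the map replacing $x_k$ by $-x_k + s x_{k-1}x_{k+1} - a_{k+1}x_{k-1} - a_{k-1}x_{k+1}$ and leaving the other coordinates unchanged, let $\rho = m_{i+1}\circ m_{i-1}$, and let $N$ be the order of $\rho$ as a permutation of the set of nonzero solutions with $i$-th coordinate $0$ (equivalently, the multiplicative order of $r_i^2$). Then the following are equivalent: (1) $a_i^2=4$; (2) $r_i^2=1$; (3) $N=1$; (4) $r_i = -a_i/2$; (5) $r_i^{-1} = -a_i/2$; (6) $x_{i-1} + \frac{a_i}{2}x_{i+1} = 0$; (7) $x_{i-1}^2 = x_{i+1}^2$; (8) $m_{i-1}x = x$; (9) $m_{i+1}x = x$.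
   Context: On solutions with $x_i=0$ the moves $m_{i\pm1}$ preserve the condition $x_i = 0$; $\rho$ multiplies the points of each of the two lines $x_{i+1}=r x_{i-1}$ (with $r$ a root of $r^2+a_ir+1=0$) by $r^{\pm 2}$. *)

From mathcomp Require Import all_boot all_order all_algebra.
Set Implicit Arguments. Unset Strict Implicit. Unset Printing Implicit Defensive.
Import GRing.Theory.
Local Open Scope ring_scope.

(* Indices 1,2,3 of the paper are represented by 'I_3 = {0,1,2};
   indices are taken modulo 3: k+1 is [ordS k], k-1 is [ord_pred k]. *)
Notation nxt k := (ordS k).
Notation prv k := (ord_pred k).

Definition pt (p : nat) := {ffun 'I_3 -> 'F_p}.

Section Markov.
Variables (p : nat) (a : 'I_3 -> 'F_p).

Definition sval : 'F_p := 3%:R + \sum_(k < 3) a k.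

Definition is_sol (x : pt p) : bool :=
  \sum_(k < 3) x k ^+ 2 + \sum_(k < 3) a k * x (prv k) * x (nxt k)
  == sval * \prod_(k < 3) x k.

Definition move (k : 'I_3) (x : pt p) : pt p :=
  [ffun j => if j == k then
      - x k + sval * x (prv k) * x (nxt k) - a (nxt k) * x (prv k)
      - a (prv k) * x (nxt k)
    else x j].

Definition rho (i : 'I_3) (x : pt p) : pt p := move (nxt i) (move (prv i) x).

Definition zero_sols (i : 'I_3) : {set pt p} :=
  [set y : pt p | [&& is_sol y, y != 0 & y i == 0]].

(* the order of rho as a permutation of [zero_sols i]: the lcm of the
   lengths of its cycles (the orbit size of y under rho) *)
Definition rho_order (i : 'I_3) : nat :=
  \big[lcmn/1%N]_(y in zero_sols i) fingraph.order (rho i) y.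

End Markov.

(* On the plane x_i = 0 the Markov-type equation becomes the binary quadratic
   u^2 + v^2 + c u v = 0 in u = x_{i-1}, v = x_{i+1}, c = a_i, and
   (2u + cv)^2 = 4 (u^2 + v^2 + c u v) + (c^2 - 4) v^2.
   Hence for a nonzero solution c^2 = 4 iff 2u + cv = 0, and symmetrically iff
   2v + cu = 0.  On that plane m_{i-1} sends u to -u - cv and m_{i+1} sends v to
   -v - cu, so they fix x exactly when these linear forms vanish; since the
   criterion does not depend on the point, rho is then the identity on the whole
   plane, i.e. N = 1.  The other conditions are rewritings of the two linear
   ones, dividing by 2 (p is odd). *)

From mathcomp Require Import all_boot all_order all_algebra.
From mathcomp Require Import ring.
Import GRing.Theory.
Local Open Scope ring_scope.

Lemma order_eq1 (T : finType) (f : T -> T) (x : T) :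
  fingraph.order f x = 1%N <-> f x = x.
Proof.
split=> [ord1 | fx].
  have : f x \in orbit f x by rewrite -fconnect_orbit fconnect1.
  by rewrite /orbit ord1 inE => /eqP.
apply/eqP; rewrite eqn_leq order_gt0 andbT.
by apply: (@order_le_cycle _ f [:: x]); rewrite /= ?fx ?eqxx ?inE.
Qed.

Lemma biglcmn_eq1 (I : finType) (P : pred I) (F : I -> nat) :
  \big[lcmn/1%N]_(j | P j) F j = 1%N <-> (forall j, P j -> F j = 1%N).
Proof.
split=> [lcm1 j Pj | F1].
  by apply/eqP; rewrite -dvdn1 -lcm1 (biglcmn_sup j).
by apply/eqP; rewrite -dvdn1; apply/dvdn_biglcmP => j /F1 ->.
Qed.

Lemma Fp_two_neq0 {p : nat} : prime p -> odd p -> 2%:R != 0 :> 'F_p.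
Proof.
move=> p_pr p_odd; rewrite -(dvdn_pcharf (pchar_Fp p_pr)).
apply/negP => /(dvdn_leq (isT : 0 < 2)%N); have := prime_gt1 p_pr.
by case: p p_odd {p_pr} => [|[|[|]]].
Qed.

Section CyclicIndices.
Implicit Types i k : 'I_3.

Lemma prv_prv i : prv (prv i) = nxt i.
Proof. by apply/val_inj; case: i => [[|[|[|?]]] ?]. Qed.

Lemma nxt_nxt i : nxt (nxt i) = prv i.
Proof. by apply/val_inj; case: i => [[|[|[|?]]] ?]. Qed.

Lemma prv_nxt i : prv (nxt i) = i.
Proof. by apply/val_inj; case: i => [[|[|[|?]]] ?]. Qed.

Lemma nxt_prv i : nxt (prv i) = i.
Proof. by apply/val_inj; case: i => [[|[|[|?]]] ?]. Qed.

Lemma ord3_neq i : [/\ nxt i != i, prv i != i & prv i != nxt i].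
Proof. by case: i => [[|[|[|?]]] ?]. Qed.

Lemma ord3_cases i k : [|| k == i, k == nxt i | k == prv i].
Proof. by case: i => [[|[|[|?]]] ?]; case: k => [[|[|[|?]]] ?]. Qed.

Lemma sum_ord3_rot i (R : nmodType) (F : 'I_3 -> R) :
  \sum_(k < 3) F k = F i + F (nxt i) + F (prv i).
Proof.
have [ni pi pn] := ord3_neq i.
rewrite (bigD1 i) // (bigD1 (nxt i)) // (bigD1 (prv i)) /=; last by rewrite pi pn.
rewrite big1 ?addr0 ?addrA // => k /andP[/andP[ki kn] kp].
by case/or3P: (ord3_cases i k) => /eqP k_eq; rewrite k_eq eqxx in ki kn kp.
Qed.

End CyclicIndices.

Section BinaryQuadratic.
Context {F : fieldType}.
Implicit Types c u v : F.

Definition binquad c u v := u ^+ 2 + v ^+ 2 + c * u * v.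

Lemma binquadC c u v : binquad c u v = binquad c v u.
Proof. by rewrite /binquad; ring. Qed.

Lemma binquad_eq0_eq0 {c u v} : binquad c u v = 0 -> (u == 0) = (v == 0).
Proof.
have eq0 u' v' : binquad c u' v' = 0 -> u' = 0 -> v' = 0.
  by move=> q0 u0; apply/eqP; rewrite -sqrf_eq0 -q0 u0 /binquad; apply/eqP; ring.
move=> q0; apply/eqP/eqP => [/(eq0 _ _ q0) //|]; rewrite binquadC in q0.
exact: eq0.
Qed.

Lemma sqr_binquad c u v :
  (2%:R * u + c * v) ^+ 2 = 4%:R * binquad c u v + (c ^+ 2 - 4%:R) * v ^+ 2.
Proof. by rewrite /binquad; ring. Qed.

Lemma binquad_discr0_lin {c u v} : v != 0 -> binquad c u v = 0 ->
  c ^+ 2 = 4%:R <-> 2%:R * u + c * v = 0.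
Proof.
move=> v0 q0; have E := sqr_binquad c u v; rewrite q0 mulr0 add0r in E.
split=> [c4 | lin0].
  by move: E; rewrite c4 subrr mul0r => /eqP; rewrite sqrf_eq0 => /eqP.
apply/eqP; rewrite -subr_eq0; apply/eqP/(mulIf (expf_neq0 2 v0)).
by rewrite mul0r -E lin0 expr0n.
Qed.

Lemma binquad_div_root {c u v} : u != 0 -> binquad c u v = 0 ->
  (v / u) ^+ 2 + c * (v / u) + 1 = 0.
Proof.
move=> u0 q0.
have -> : (v / u) ^+ 2 + c * (v / u) + 1 = binquad c u v / u ^+ 2.
  by rewrite /binquad; field.
by rewrite q0 mul0r.
Qed.

Lemma sqr_div_eq1 {u v} : u != 0 -> (v / u) ^+ 2 = 1 <-> u ^+ 2 = v ^+ 2.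
Proof.
move=> u0; rewrite expr_div_n; split=> [vu1 | <-]; last by rewrite divff ?expf_neq0.
by rewrite -[LHS]mul1r -vu1 divfK ?expf_neq0.
Qed.

Hypothesis two_neq0 : 2%:R != 0 :> F.

Lemma binquad_discr0_sqr {c u v} : u != 0 -> v != 0 -> binquad c u v = 0 ->
  c ^+ 2 = 4%:R <-> u ^+ 2 = v ^+ 2.
Proof.
move=> u0 v0 q0; have q0' : binquad c v u = 0 by rewrite binquadC.
have [lin_u _] := binquad_discr0_lin v0 q0; have [lin_v _] := binquad_discr0_lin u0 q0'.
split=> [c4 | uv].
  have : 2%:R * (u ^+ 2 - v ^+ 2) = u * (2%:R * u + c * v) - v * (2%:R * v + c * u).
    by ring.
  rewrite lin_u // lin_v // !mulr0 subrr => /eqP.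
  by rewrite mulf_eq0 (negbTE two_neq0) subr_eq0 => /eqP.
apply/(binquad_discr0_lin v0 q0).
have : u * (2%:R * u + c * v) = binquad c u v + (u ^+ 2 - v ^+ 2).
  by rewrite /binquad; ring.
by rewrite q0 uv subrr addr0 => /eqP; rewrite mulf_eq0 (negbTE u0) => /eqP.
Qed.

Lemma div_eq_Nhalf {c u v} : u != 0 ->
  v / u = - (c / 2%:R) <-> 2%:R * v + c * u = 0.
Proof.
move=> u0; have -> : 2%:R * v + c * u = (v / u + c / 2%:R) * (2%:R * u).
  by field; rewrite two_neq0.
split=> [-> | /eqP]; first by rewrite addNr mul0r.
by rewrite mulf_eq0 (negbTE (mulf_neq0 two_neq0 u0)) orbF addr_eq0 => /eqP.
Qed.

Lemma addr_halfM_eq0 {c u v} : u + c / 2%:R * v = 0 <-> 2%:R * u + c * v = 0.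
Proof.
have -> : 2%:R * u + c * v = 2%:R * (u + c / 2%:R * v) by field.
split=> [-> | /eqP]; first by rewrite mulr0.
by rewrite mulf_eq0 (negbTE two_neq0) => /eqP.
Qed.

End BinaryQuadratic.

Section MarkovMoves.
Context {p : nat} {a : 'I_3 -> 'F_p}.
Implicit Types (x : pt p) (i k : 'I_3).

Lemma binquad_zero_coord {x i} : is_sol a x -> x i = 0 ->
  binquad (a i) (x (prv i)) (x (nxt i)) = 0.
Proof.
move=> /eqP sol_x xi0; move: sol_x.
rewrite !(sum_ord3_rot i) (bigD1 i) //= xi0 mul0r.
by rewrite prv_prv nxt_nxt prv_nxt nxt_prv xi0 !mulr0 => <-; rewrite /binquad; ring.
Qed.

Lemma zero_coord_neighbors_neq0 {x i} : is_sol a x -> x != 0 -> x i = 0 ->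
  x (prv i) != 0 /\ x (nxt i) != 0.
Proof.
move=> sol_x x_neq0 xi0.
have uv := binquad_eq0_eq0 (binquad_zero_coord sol_x xi0).
suff xp0 : x (prv i) != 0 by rewrite -uv.
apply: contraNneq x_neq0 => xp0; have /eqP xn0 : x (nxt i) == 0 by rewrite -uv xp0.
apply/eqP/ffunP => k; rewrite ffunE.
by case/or3P: (ord3_cases i k) => /eqP ->.
Qed.

Lemma move_other k j x : j != k -> move a k x j = x j.
Proof. by rewrite /move ffunE => /negbTE ->. Qed.

Lemma move_fixedE k x : move a k x = x <-> move a k x k = x k.
Proof.
split=> [-> // | fixed_k]; apply/ffunP => j.
by case: (eqVneq j k) => [-> // | jk]; rewrite move_other.
Qed.

Lemma move_fixed_lin k x w : move a k x k = - x k - w ->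
  move a k x = x <-> 2%:R * x k + w = 0.
Proof.
move=> move_k; rewrite move_fixedE move_k.
have -> : 2%:R * x k + w = x k - (- x k - w) by ring.
by split=> [-> | /subr0_eq <-]; rewrite ?subrr.
Qed.

Lemma move_prv_fixed {x i} : x i = 0 ->
  move a (prv i) x = x <-> 2%:R * x (prv i) + a i * x (nxt i) = 0.
Proof.
by move=> xi0; apply: move_fixed_lin; rewrite /move ffunE eqxx prv_prv nxt_prv xi0; ring.
Qed.

Lemma move_nxt_fixed {x i} : x i = 0 ->
  move a (nxt i) x = x <-> 2%:R * x (nxt i) + a i * x (prv i) = 0.
Proof.
by move=> xi0; apply: move_fixed_lin; rewrite /move ffunE eqxx nxt_nxt prv_nxt xi0; ring.
Qed.

Lemma rho_fixed {x i} : x \in zero_sols a i -> rho a i x = x <-> a i ^+ 2 = 4%:R.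
Proof.
rewrite inE => /and3P[sol_x x_neq0 /eqP xi0].
have [u0 v0] := zero_coord_neighbors_neq0 sol_x x_neq0 xi0.
have q0 := binquad_zero_coord sol_x xi0.
have q0' : binquad (a i) (x (nxt i)) (x (prv i)) = 0 by rewrite binquadC.
split=> [rho_x | c4].
  apply/(binquad_discr0_lin v0 q0)/(move_prv_fixed xi0)/move_fixedE.
  have [_ _ pn] := ord3_neq i.
  by rewrite -{2}rho_x /rho (move_other (nxt i)).
have fix_prv := (move_prv_fixed xi0).2 ((binquad_discr0_lin v0 q0).1 c4).
have fix_nxt := (move_nxt_fixed xi0).2 ((binquad_discr0_lin u0 q0').1 c4).
by rewrite /rho fix_prv fix_nxt.
Qed.

Lemma rho_order_eq1 {i} : zero_sols a i != set0 ->
  rho_order a i = 1%N <-> a i ^+ 2 = 4%:R.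
Proof.
case/set0Pn => x x_in; rewrite /rho_order biglcmn_eq1.
split=> [ord1 | c4 y y_in]; first exact/(rho_fixed x_in)/order_eq1/ord1.
exact/order_eq1/(rho_fixed y_in).
Qed.

End MarkovMoves.

Theorem lemma2p1 (p : nat) (hp : prime p) (hodd : odd p)
  (a : 'I_3 -> 'F_p) (x : pt p) (i : 'I_3) :
  is_sol a x -> x != 0 -> x i = 0 ->
  let r := x (nxt i) / x (prv i) in
  let N := rho_order a i in
  x (prv i) != 0 /\ r ^+ 2 + a i * r + 1 = 0 /\
  ((a i ^+ 2 = 4%:R <-> r ^+ 2 = 1) /\
   (a i ^+ 2 = 4%:R <-> N = 1%N) /\
   (a i ^+ 2 = 4%:R <-> r = - (a i / 2%:R)) /\
   (a i ^+ 2 = 4%:R <-> r^-1 = - (a i / 2%:R)) /\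
   (a i ^+ 2 = 4%:R <-> x (prv i) + a i / 2%:R * x (nxt i) = 0) /\
   (a i ^+ 2 = 4%:R <-> x (prv i) ^+ 2 = x (nxt i) ^+ 2) /\
   (a i ^+ 2 = 4%:R <-> move a (prv i) x = x) /\
   (a i ^+ 2 = 4%:R <-> move a (nxt i) x = x)).
Proof.
move=> sol_x x_neq0 xi0 r N; rewrite {}/r {}/N invf_div.
have two_neq0 := Fp_two_neq0 hp hodd.
have [u0 v0] := zero_coord_neighbors_neq0 sol_x x_neq0 xi0.
have q0 := binquad_zero_coord sol_x xi0.
have q0' : binquad (a i) (x (nxt i)) (x (prv i)) = 0 by rewrite binquadC.
have lin_u := binquad_discr0_lin v0 q0.
have lin_v := binquad_discr0_lin u0 q0'.
have sqr_uv := binquad_discr0_sqr two_neq0 u0 v0 q0.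
have x_in : x \in zero_sols a i by rewrite inE sol_x x_neq0 xi0 eqxx.
split; first exact: u0.
split; first exact: binquad_div_root u0 q0.
split; first exact: iff_trans sqr_uv (iff_sym (sqr_div_eq1 u0)).
split; first by apply: iff_sym; apply: rho_order_eq1; apply/set0Pn; exists x.
split; first exact: iff_trans lin_v (iff_sym (div_eq_Nhalf two_neq0 u0)).
split; first exact: iff_trans lin_u (iff_sym (div_eq_Nhalf two_neq0 v0)).
split; first exact: iff_trans lin_u (iff_sym (addr_halfM_eq0 two_neq0)).
split; first exact: sqr_uv.
split; first exact: iff_trans lin_u (iff_sym (move_prv_fixed xi0)).
exact: iff_trans lin_v (iff_sym (move_nxt_fixed xi0)).
Qed.
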